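(* Let $k\ge 1$ and let $F$ be a partially colored forest. If Alice can win the $k$-Modified Coloring Game on $\mathcal{R}(F)$, then she can win the $k$-coloring game on $F$.
   Context: All graphs are finite. A partial coloring of a graph assigns to some vertices colors from a fixed set $C$ of $k$ colors so that adjacent colored vertices receive different colors. A color $\alpha\in C$ is legal for an uncolored vertex $v$ if no neighbor of $v$ is colored $\alpha$. The $k$-coloring game on a (partially colored) graph $G$: Alice and Bob alternate turns, Alice first, each turn coloring an uncolored vertex with a legal color from $C$. If at any point some uncolored vertex has no legal color, Bob wins; if every vertex becomes colored, Alice wins. The $k$-Modified Coloring Game ($k$-MCG) is the same except that Bob plays first and Bob may choose to pass on any turn. For a partially colored forest $F$, a trunk of $F$ is a maximal connected subgraph $R$ of $F$ such that every colored vertex of $R$ is a leaf of $R$ (so each uncolored vertex lies in exactly one trunk, and a colored vertex of degree $d$ lies in exactly $d$ trunks). $\mathcal{R}(F)$ denotes the partially colored forest that is the disjoint union of all trunks of $F$ (a colored vertex lying in several trunks appears as a separate copy, with its color, in each of them). *)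

From mathcomp Require Import all_boot.
Set Implicit Arguments. Unset Strict Implicit. Unset Printing Implicit Defensive.

Definition simple_graph (T : finType) (e : rel T) : Prop :=
  symmetric e /\ irreflexive e.

Definition forest (T : finType) (e : rel T) : Prop :=
  simple_graph e /\ ~ (exists s : seq T, [/\ 2 < size s, uniq s & cycle e s]).

(* c v = None means v is uncolored. *)
Definition proper_partial (T : finType) (e : rel T) (k : nat)
  (c : T -> option 'I_k) : Prop :=
  forall x y, e x y -> c x != None -> c x != c y.

Section Game.
Variables (T : finType) (e : rel T) (k : nat).

Definition legal (c : T -> option 'I_k) (v : T) (a : 'I_k) : bool :=
  [forall w, e v w ==> (c w != Some a)].

Definition all_colored (c : T -> option 'I_k) : Prop := forall v, c v != None.

Definition stuck (c : T -> option 'I_k) : Prop :=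
  exists v, c v = None /\ forall a, ~~ legal c v a.

Definition upd (c : T -> option 'I_k) (v : T) (a : 'I_k) : T -> option 'I_k :=
  fun w => if w == v then Some a else c w.

(* Alice has a winning strategy, from position c.
   [AliceTurn pass c]: Alice is to move; [BobTurn pass c]: Bob is to move.
   If [pass = true], Bob may pass on any of his turns. *)
Inductive AliceTurn (pass : bool) : (T -> option 'I_k) -> Prop :=
| A_done c : all_colored c -> AliceTurn pass c
| A_move c v a : ~ stuck c -> c v = None -> legal c v a ->
    BobTurn pass (upd c v a) -> AliceTurn pass c
with BobTurn (pass : bool) : (T -> option 'I_k) -> Prop :=
| B_done c : all_colored c -> BobTurn pass c
| B_all c : ~ stuck c ->
    (forall v a, c v = None -> legal c v a -> AliceTurn pass (upd c v a)) ->
    (pass = true -> AliceTurn pass c) ->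
    BobTurn pass c.

(* k-coloring game: Alice first, no passing. *)
Definition alice_wins_cg (c : T -> option 'I_k) : Prop := AliceTurn false c.
(* k-Modified Coloring Game: Bob first, Bob may pass. *)
Definition alice_wins_mcg (c : T -> option 'I_k) : Prop := BobTurn true c.

End Game.

Section Trunks.
Variables (V : finType) (e : rel V) (k : nat) (c : V -> option 'I_k).

(* a (sub)graph: vertex set and set of ordered edges (symmetric) *)
Definition SG := ({set V} * {set V * V})%type.

Definition is_subgraph (G : SG) : bool :=
  [forall x, forall y, ((x, y) \in G.2) ==>
     [&& e x y, x \in G.1, y \in G.1 & (y, x) \in G.2]].

Definition sg_rel (G : SG) : rel V := fun a b => (a, b) \in G.2.

Definition sg_connected (G : SG) : bool :=
  (G.1 != set0) && [forall x in G.1, forall y in G.1, connect (sg_rel G) x y].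

Definition sg_deg (G : SG) (x : V) : nat := #|[set y | (x, y) \in G.2]|.

Definition trunk_cond (G : SG) : bool :=
  [&& is_subgraph G, sg_connected G &
      [forall x in G.1, (c x != None) ==> (sg_deg G x == 1)]].

Definition sg_le (G H : SG) : bool := (G.1 \subset H.1) && (G.2 \subset H.2).

Definition is_trunk (G : SG) : bool :=
  trunk_cond G && [forall H : SG, (trunk_cond H && sg_le G H) ==> (H == G)].

(* vertices of R(F): pairs (trunk, vertex of that trunk) *)
Definition RV := {p : SG * V | is_trunk p.1 && (p.2 \in p.1.1)}.

Definition Redge : rel RV := fun x y =>
  ((val x).1 == (val y).1) && (((val x).2, (val y).2) \in (val x).1.2).

Definition Rcol : RV -> option 'I_k := fun x => c (val x).2.

End Trunks.

From mathcomp Require Import all_boot.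
Set Implicit Arguments. Unset Strict Implicit. Unset Printing Implicit Defensive.

(* An uncolored vertex v of F lies in exactly one trunk, and, F being a forest, every
   edge of F at v belongs to that trunk. So v has a unique copy in R(F), whose neighbours
   are copies of the neighbours of v, and a color is legal for v in F iff it is legal for
   the copy. Positions of the game on F therefore correspond to positions on R(F) colored
   as their images. Bob opens the MCG on R(F) by passing; Alice then plays on F what her
   winning strategy plays on R(F), and every move of Bob on F is a legal move of Bob on
   the corresponding copy. *)

Scheme AliceTurn_min := Minimality for AliceTurn Sort Prop
  with BobTurn_min := Minimality for BobTurn Sort Prop.

Lemma connect_uniq_path (T : finType) (r : rel T) x y : connect r x y ->
  exists2 p, path r x p & uniq (x :: p) /\ last x p = y.
Proof. by case/connectP=> p /shortenP[p' hp' hu _] ->; exists p'. Qed.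

Section Trunks.
Variables (k : nat) (V : finType) (e : rel V) (c : V -> option 'I_k).

Lemma subgraphP (G : SG V) x y : is_subgraph e G -> (x, y) \in G.2 ->
  [&& e x y, x \in G.1, y \in G.1 & (y, x) \in G.2].
Proof. by move=> /forallP/(_ x)/forallP/(_ y)/implyP. Qed.

Lemma subgraph_connect_sym (G : SG V) : is_subgraph e G -> connect_sym (sg_rel G).
Proof.
by move=> hG; apply: sym_connect_sym => x y; apply/idP/idP => /(subgraphP hG)/and4P[].
Qed.

Section TrunkCond.
Variables (T : SG V) (hT : trunk_cond e c T).

Lemma trunk_cond_subgraph : is_subgraph e T.
Proof. by case/and3P: hT. Qed.

Lemma trunk_cond_connect x y : x \in T.1 -> y \in T.1 -> connect (sg_rel T) x y.
Proof.
case/and3P: hT => _ /andP[_ /forallP hconn] _ hx hy.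
exact: implyP (forallP (implyP (hconn x) hx) y) hy.
Qed.

Lemma trunk_cond_leaf x : x \in T.1 -> c x != None -> sg_deg T x = 1.
Proof.
by case/and3P: hT => _ _ /forallP/(_ x) hleaf hx hcx; apply/eqP; rewrite hx hcx in hleaf.
Qed.

Lemma trunk_cond_leaf_nbr x y1 y2 : c x != None ->
  (x, y1) \in T.2 -> (x, y2) \in T.2 -> y1 = y2.
Proof.
move=> hcx h1 h2; apply/eqP; apply: contraT => hne.
have hx : x \in T.1 by case/and4P: (subgraphP trunk_cond_subgraph h1).
have : #|[set y1; y2]| <= sg_deg T x.
  by apply: subset_leq_card; apply/subsetP => y; rewrite !inE => /orP[]/eqP->.
by rewrite cards2 hne trunk_cond_leaf.
Qed.

(* A colored vertex is a leaf, so it cannot be an inner vertex of a simple path. *)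
Lemma trunk_cond_uncolored_path v x : v \in T.1 -> x \in T.1 -> c v = None ->
  exists2 p, path (sg_rel T) v p &
    last v p = x /\ all (fun y => c y == None) (belast v p).
Proof.
move=> hv hx cv; have [p hp [hu <-]] := connect_uniq_path (trunk_cond_connect hv hx).
exists p => //; split => //; elim: p v hp hu cv {hv} => [|w p IHp] v //= /andP[hvw hp].
case/andP=> hv hu cv; rewrite cv eqxx /=; case: p => [|u p] in IHp hp hu hv * => //.
apply: IHp => //; apply: contraTeq hv => hcw.
have hwv : (w, v) \in T.2 by case/and4P: (subgraphP trunk_cond_subgraph hvw).
have hwu : (w, u) \in T.2 by case/andP: hp.
by rewrite (trunk_cond_leaf_nbr hcw hwv hwu) !inE eqxx orbT.
Qed.

End TrunkCond.

Hypothesis forest_e : forest e.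

Lemma forest_sym : symmetric e.
Proof. by case: forest_e => [[]]. Qed.

(* Otherwise a simple r-path from v to w closes up with the edge vw into a cycle. *)
Lemma forest_connect_edge (r : rel V) v w : subrel r e ->
  connect r v w -> e v w -> r v w.
Proof.
move=> hre /connect_uniq_path[p hp [hu hl]] evw; apply: contraT => hnr.
case: forest_e => [[_ irr_e] nocycle]; case: nocycle; exists (v :: p); split => //.
  case: p hp hu hl => [|a [|b p]] //= hp _ hl.
    by move: evw; rewrite -hl irr_e.
  by move: hp hnr; rewrite andbT hl => ->.
by rewrite /= rcons_path hl forest_sym evw (sub_path hre hp).
Qed.

Lemma trunk_cond_add_edge (T : SG V) v w : trunk_cond e c T ->
  v \in T.1 -> c v = None -> e v w -> w \notin T.1 ->
  trunk_cond e c (w |: T.1, (v, w) |: ((w, v) |: T.2)).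
Proof.
move=> hT hv cv evw hw; set H : SG V := (_, _).
have hsT := trunk_cond_subgraph hT.
have hwv : w != v by apply: contraNneq hw => ->.
have hsH : is_subgraph e H.
  apply/forallP => x; apply/forallP => y; apply/implyP.
  rewrite /H /= !inE !xpair_eqE.
  case/or3P=> [/andP[/eqP-> /eqP->]|/andP[/eqP-> /eqP->]|].
  - by rewrite evw hv !eqxx /= !orbT.
  - by rewrite forest_sym evw hv !eqxx /= !orbT.
  - by case/(subgraphP hsT)/and4P=> -> -> -> ->; rewrite !orbT.
have hTH : subrel (sg_rel T) (sg_rel H).
  by rewrite /sg_rel => x y hxy; rewrite /= !inE hxy !orbT.
have hconn x : x \in H.1 -> connect (sg_rel H) v x.
  rewrite !inE => /orP[/eqP->|hx]; first by apply: connect1; rewrite /sg_rel /= !inE eqxx.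
  by apply: connect_sub (trunk_cond_connect hT hv hx) => a b /hTH/connect1.
apply/and3P; split=> //.
  apply/andP; split; first by apply/set0Pn; exists w; rewrite !inE eqxx.
  apply/forallP => x; apply/implyP => hx; apply/forallP => y; apply/implyP => hy.
  by rewrite (connect_trans _ (hconn y hy)) // (subgraph_connect_sym hsH) hconn.
apply/forallP => x; apply/implyP; rewrite !inE => /orP[/eqP->|hx]; apply/implyP => hcx.
  rewrite /sg_deg -(cards1 v); apply/eqP/eq_card => y.
  rewrite !inE !xpair_eqE (negbTE hwv) eqxx /=; case: (boolP (_ \in _)) => [|_].
    by case/(subgraphP hsT)/and4P=> _ hw'; rewrite hw' in hw.
  by rewrite orbF.
have hxv : x != v by apply: contraNneq hcx => ->; rewrite cv.
have hxw : x != w by apply: contraNneq hw => <-.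
rewrite -(trunk_cond_leaf hT hx hcx); apply/eqP/eq_card => y.
by rewrite !inE !xpair_eqE (negbTE hxv) (negbTE hxw).
Qed.

Lemma trunk_trunk_cond (T : SG V) : is_trunk e c T -> trunk_cond e c T.
Proof. by case/andP. Qed.

Lemma trunk_maximal (T H : SG V) : is_trunk e c T -> trunk_cond e c H ->
  sg_le T H -> H = T.
Proof.
by case/andP=> _ /forallP/(_ H) hmax hH hTH; apply/eqP; rewrite hH hTH in hmax.
Qed.

Lemma trunk_edge_closed (T : SG V) v w : is_trunk e c T ->
  v \in T.1 -> c v = None -> e v w -> (v, w) \in T.2.
Proof.
move=> hT hv cv evw; have hTc := trunk_trunk_cond hT.
have [hw|hw] := boolP (w \in T.1).
  apply: (forest_connect_edge _ (trunk_cond_connect hTc hv hw)) => // x y.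
  by case/(subgraphP (trunk_cond_subgraph hTc))/andP.
have hTH : sg_le T (w |: T.1, (v, w) |: ((w, v) |: T.2)).
  by rewrite /sg_le !subsetU1 (subset_trans (subsetU1 _ _) (subsetU1 _ _)).
by rewrite -(trunk_maximal hT (trunk_cond_add_edge hTc hv cv evw hw) hTH) !inE eqxx.
Qed.

Lemma sg_le_trans : transitive (@sg_le V).
Proof.
move=> H G K /andP[hGH1 hGH2] /andP[hHK1 hHK2].
by rewrite /sg_le (subset_trans hGH1 hHK1) (subset_trans hGH2 hHK2).
Qed.

Lemma sg_le_size_eq (G H : SG V) : sg_le G H ->
  #|H.1| + #|H.2| <= #|G.1| + #|G.2| -> H = G.
Proof.
case: G H => [G1 G2] [H1 H2] /andP[/= s1 s2] hsize.
have c1 := subset_leq_card s1; have c2 := subset_leq_card s2.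
apply/eqP; rewrite xpair_eqE /= [H1 == _]eq_sym [H2 == _]eq_sym !eqEcard s1 s2 /=.
by apply/andP; split; [rewrite -(leq_add2r #|H2|) | rewrite -(leq_add2l #|H1|)];
  apply: leq_trans hsize _; rewrite ?leq_add2l ?leq_add2r.
Qed.

Lemma trunk_cond_vertex v : c v = None -> trunk_cond e c ([set v], set0).
Proof.
move=> cv; apply/and3P; split.
- by apply/forallP => x; apply/forallP => y; rewrite in_set0.
- apply/andP; split; first by apply/set0Pn; exists v; rewrite inE.
  by apply/forallP => x; apply/implyP; rewrite inE => /eqP->;
     apply/forallP => y; apply/implyP; rewrite inE => /eqP->.
- by apply/forallP => x; apply/implyP; rewrite inE => /eqP->; rewrite cv.
Qed.

Lemma exists_trunk v : c v = None -> exists T : SG V, is_trunk e c T && (v \in T.1).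
Proof.
move=> cv; pose H0 : SG V := ([set v], set0).
have hH0 : trunk_cond e c H0 && sg_le H0 H0.
  by rewrite trunk_cond_vertex // /sg_le !subxx.
case: (@arg_maxnP _ H0 (fun H => trunk_cond e c H && sg_le H0 H)
  (fun H => #|H.1| + #|H.2|) hH0) => T /andP[hT hle] hmax.
exists T; rewrite (subsetP (proj1 (andP hle))) ?inE // andbT /is_trunk hT.
apply/forallP => H; apply/implyP => /andP[hH hTH]; apply/eqP.
by apply: (sg_le_size_eq hTH); apply: hmax; rewrite hH (sg_le_trans hle hTH).
Qed.

Lemma trunk_path_last (T : SG V) a p : is_trunk e c T -> a \in T.1 -> path e a p ->
  all (fun y => c y == None) (belast a p) -> last a p \in T.1.
Proof.
move=> hT; elim: p a => [|w p IHp] a //= ha /andP[eaw hp] /andP[/eqP ca hb].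
have := trunk_edge_closed hT ha ca eaw.
have hsT := trunk_cond_subgraph (trunk_trunk_cond hT).
by case/(subgraphP hsT)/and4P=> _ _ hw _; apply: IHp.
Qed.

Lemma trunk_cond_edge_uncolored (T : SG V) v a b : trunk_cond e c T ->
  v \in T.1 -> c v = None -> (a, b) \in T.2 -> c a = None \/ c b = None.
Proof.
move=> hT hv cv hab; case: (c a =P None) => [|/eqP ca]; [by left | right].
have /and4P[_ ha _ _] := subgraphP (trunk_cond_subgraph hT) hab.
have [p] := trunk_cond_uncolored_path hT hv ha cv.
case/lastP: p => [_ [/= eva]|q a' + [+ hb]]; first by rewrite -eva cv in ca.
rewrite last_rcons rcons_path belast_rcons in hb * => /andP[_ hqa] ea.
rewrite ea in hqa; have cq : c (last v q) = None by apply/eqP/(allP hb); exact: mem_last.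
have [_ _ _ haq] := and4P (subgraphP (trunk_cond_subgraph hT) hqa).
by rewrite (trunk_cond_leaf_nbr hT ca hab haq).
Qed.

Lemma trunk_unique (T1 T2 : SG V) v : is_trunk e c T1 -> is_trunk e c T2 ->
  v \in T1.1 -> v \in T2.1 -> c v = None -> T1 = T2.
Proof.
move=> hT1 hT2 hv1 hv2 cv; have hT1c := trunk_trunk_cond hT1.
have hs1 := trunk_cond_subgraph hT1c.
have hs2 := trunk_cond_subgraph (trunk_trunk_cond hT2).
have hV x : x \in T1.1 -> x \in T2.1.
  move=> hx; have [p hp [<- hb]] := trunk_cond_uncolored_path hT1c hv1 hx cv.
  by apply: trunk_path_last hT2 hv2 _ hb; apply: sub_path hp => a b /(subgraphP hs1)/andP[].
apply/esym/(trunk_maximal hT1 (trunk_trunk_cond hT2)).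
apply/andP; split; apply/subsetP; first exact: hV.
case=> a b hab; have /and4P[eab ha hb _] := subgraphP hs1 hab.
case: (trunk_cond_edge_uncolored hT1c hv1 cv hab) => [ca|cb].
  exact: trunk_edge_closed hT2 (hV _ ha) ca eab.
rewrite forest_sym in eab.
by case/(subgraphP hs2)/and4P: (trunk_edge_closed hT2 (hV _ hb) cb eab).
Qed.

End Trunks.

Section Lifting.
Variables (k : nat) (V : finType) (e : rel V) (c : V -> option 'I_k).
Hypothesis forest_e : forest e.
Notation RE := (@Redge V e k c).
Implicit Types (x y : RV e c) (d : V -> option 'I_k) (s : RV e c -> option 'I_k).

Lemma RV_trunk x : is_trunk e c (val x).1 /\ (val x).2 \in (val x).1.1.
Proof. by case/andP: (valP x). Qed.

Lemma Redge_edge x y : RE x y -> e (val x).2 (val y).2.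
Proof.
case/andP=> _ hxy; have [hT _] := RV_trunk x.
by case/(subgraphP (trunk_cond_subgraph (trunk_trunk_cond hT)))/andP: hxy.
Qed.

Lemma exists_copy v : c v = None -> exists x : RV e c, (val x).2 = v.
Proof. by case/(exists_trunk e) => T hT; exists (Sub (T, v) hT). Qed.

Lemma copy_unique x y : (val x).2 = (val y).2 -> c (val x).2 = None -> x = y.
Proof.
move=> hxy cx; have [hx vx] := RV_trunk x; have [hy vy] := RV_trunk y.
rewrite hxy in vx cx; have hT := trunk_unique forest_e hx hy vx vy cx.
by apply: val_inj; move: hxy hT; case: (val x) (val y) => [T1 v1] [T2 v2] /= -> ->.
Qed.

Lemma Redge_lift x w : c (val x).2 = None -> e (val x).2 w ->
  exists2 y, RE x y & (val y).2 = w.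
Proof.
move=> cx ew; have [hT hv] := RV_trunk x.
have hxw := trunk_edge_closed forest_e hT hv cx ew.
have /and4P[_ _ hw _] := subgraphP (trunk_cond_subgraph (trunk_trunk_cond hT)) hxw.
have hy : is_trunk e c ((val x).1, w).1 && (((val x).1, w).2 \in ((val x).1, w).1.1).
  by rewrite /= hT hw.
by exists (Sub ((val x).1, w) hy); rewrite // /Redge SubK /= eqxx hxw.
Qed.

Definition lift_col d : RV e c -> option 'I_k := fun x => d (val x).2.

Definition extends_col d := forall v, c v != None -> d v = c v.

Lemma legal_lift s d x a : s =1 lift_col d -> c (val x).2 = None ->
  legal RE s x a = legal e d (val x).2 a.
Proof.
move=> hs cx; apply/forallP/forallP => hleg w; apply/implyP => hw.
  have [y hxy <-] := Redge_lift cx hw.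
  by have := implyP (hleg y) hxy; rewrite hs.
by have := implyP (hleg (val w).2) (Redge_edge hw); rewrite hs.
Qed.

Lemma extends_col_uncolored d v : extends_col d -> d v = None -> c v = None.
Proof. by move=> hd dv; case: (c v =P None) => // /eqP cv; rewrite -(hd v cv). Qed.

Lemma extends_col_upd d v a : extends_col d -> c v = None -> extends_col (upd d v a).
Proof.
move=> hd cv w cw; rewrite /upd; case: eqP => [ewv|_]; last exact: hd.
by rewrite ewv cv in cw.
Qed.

Lemma upd_lift_col s d x a : s =1 lift_col d -> c (val x).2 = None ->
  upd s x a =1 lift_col (upd d (val x).2 a).
Proof.
move=> hs cx y; rewrite /upd /lift_col; case: eqP => [->|nyx]; first by rewrite eqxx.
case: eqP => [eyx|_]; last exact: hs.
by case: nyx; apply: copy_unique; rewrite ?eyx.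
Qed.

Lemma all_colored_lift s d : extends_col d -> s =1 lift_col d ->
  all_colored s -> all_colored d.
Proof.
move=> hd hs hall v; apply/eqP => cv.
have [x hx] := exists_copy (extends_col_uncolored hd cv).
by have := hall x; rewrite hs /lift_col hx cv.
Qed.

Lemma not_stuck_lift s d : extends_col d -> s =1 lift_col d ->
  ~ stuck RE s -> ~ stuck e d.
Proof.
move=> hd hs hns [v [cv hleg]]; apply: hns.
have cv0 := extends_col_uncolored hd cv; have [x hx] := exists_copy cv0.
exists x; split; first by rewrite hs /lift_col hx.
by move=> a; rewrite (legal_lift a hs) hx.
Qed.

Lemma AliceTurn_lift s : AliceTurn RE true s ->
  forall d, extends_col d -> s =1 lift_col d -> AliceTurn e false d.
Proof.
move=> hA; apply: (@AliceTurn_min _ RE k true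
  (fun s => forall d, extends_col d -> s =1 lift_col d -> AliceTurn e false d)
  (fun s => forall d, extends_col d -> s =1 lift_col d -> BobTurn e false d)) hA.
- by move=> s0 hall d hd hs; apply/A_done/(all_colored_lift hd hs).
- move=> s0 x a hns sx hleg _ IH d hd hs.
  have dx : d (val x).2 = None by rewrite -sx hs.
  have cx := extends_col_uncolored hd dx.
  apply: (@A_move _ _ _ _ _ (val x).2 a) => //.
  + exact: not_stuck_lift hns.
  + by rewrite -(legal_lift a hs cx).
  + exact: IH (extends_col_upd a hd cx) (upd_lift_col a hs cx).
- by move=> s0 hall d hd hs; apply/B_done/(all_colored_lift hd hs).
- move=> s0 hns _ IH _ _ d hd hs; apply: B_all => //; first exact: not_stuck_lift hns.
  move=> v a dv hleg; have cv := extends_col_uncolored hd dv.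
  have [x hx] := exists_copy cv; rewrite -hx in cv dv hleg *.
  apply: IH (extends_col_upd a hd cv) (upd_lift_col a hs cv).
  + by rewrite hs.
  + by rewrite (legal_lift a hs cv).
Qed.

End Lifting.

Theorem lemma2p1 (k : nat) (V : finType) (e : rel V) (c : V -> option 'I_k) :
  0 < k -> forest e -> proper_partial e c ->
  alice_wins_mcg (@Redge V e k c) (@Rcol V e k c) ->
  alice_wins_cg e c.
Proof.
move=> _ forest_e _ hB; have hc : extends_col c c by [].
have : @Rcol V e k c =1 lift_col c by [].
case: hB => [s hall|s _ _ hpass] hs; first exact/A_done/(all_colored_lift hc hs).
exact: (AliceTurn_lift forest_e (hpass erefl) hc hs).
Qed.
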